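(* Let $(A,S)$ be a QP and $I\subseteq Q_0$ a subset of vertices. Then the homomorphism $\psi_I$ induces an epimorphism of Jacobian algebras $\mathcal P(A,S)\to\mathcal P(A|_I,S|_I)$ and an epimorphism of deformation spaces $\mathrm{Def}(A,S)\to\mathrm{Def}(A|_I,S|_I)$. Consequently, if $\mathcal P(A,S)$ is finite-dimensional, or if $(A,S)$ is rigid, then the same is true for $(A|_I,S|_I)$.
   Context: Fix a field $K$; quiver $Q$ with vertices $Q_0$; $R=K^{Q_0}$; arrow span $A$, $A_{i,j}=e_iAe_j$ spanned by arrows $j\to i$. Complete path algebra $R\langle\langle A\rangle\rangle=\prod_dA^d$ with $\mathfrak m$-adic topology. Potentials; cyclic equivalence (difference in the closure of the span of $a_1\cdots a_d-a_2\cdots a_da_1$); $\partial_a(a_1\cdots a_d)=\sum_{p:a_p=a}a_{p+1}\cdots a_da_1\cdots a_{p-1}$; $J(S)$ closure of the ideal generated by all $\partial_aS$; $\mathcal P(A,S)=R\langle\langle A\rangle\rangle/J(S)$. QP: no loops, no two cyclically equivalent cyclic paths in $S$. $\mathrm{Tr}(U)=U/\{U,U\}$ ($\{U,U\}$ closure of span of commutators); $\mathrm{Def}(A,S)=\mathrm{Tr}(\mathcal P(A,S))/R$; $(A,S)$ rigid if $\mathrm{Def}(A,S)=0$. Restriction: $A|_I=\bigoplus_{i,j\in I}A_{i,j}$ (over vertex set $I$, with $R_I=K^I$), $\psi_I:R\langle\langle A\rangle\rangle\to R\langle\langle A|_I\rangle\rangle$ the algebra homomorphism fixing arrows of $A|_I$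 and sending all other arrows (and $e_i$, $i\notin I$) to $0$, and $S|_I=\psi_I(S)$. *)

From HB Require Import structures.
From mathcomp Require Import all_boot all_order all_algebra.
Set Implicit Arguments. Unset Strict Implicit. Unset Printing Implicit Defensive.
Import GRing.Theory.
Local Open Scope ring_scope.

(* A finite quiver: vertices, arrows, source and target.
   An arrow a : j -> i (qsrc a = j, qtgt a = i) spans A_{i,j}. *)
Record quiver := Quiver {
  qV : finType; qE : finType; qsrc : qE -> qV; qtgt : qE -> qV }.

Section Paths.
Variable Q : quiver.

(* A path is a triple (i, j, w): w = [:: a_1; ...; a_d] is the word
   a_1 a_2 ... a_d (a_d applied first), from vertex j to vertex i;
   the empty word with i = j is the trivial path e_i. *)
Definition valid_path (t : qV Q * qV Q * seq (qE Q)) : bool :=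
  let: (i, j, w) := t in
  if w is a :: w' then
    [&& qtgt a == i, qsrc (last a w') == j
      & path (fun x y => qsrc x == qtgt y) a w']
  else i == j.

Definition qpath := {t : qV Q * qV Q * seq (qE Q) | valid_path t}.

Definition plen (p : qpath) : nat := size (val p).2.
Definition pword (p : qpath) : seq (qE Q) := (val p).2.
End Paths.

Section CPA.
Variables (K : fieldType) (Q : quiver).

(* Elements of the complete path algebra R<<A>> = prod_d A^d:
   arbitrary (possibly infinite) formal K-linear combinations of paths. *)
Definition cpa := qpath Q -> K.

Definition coef (f : cpa) (t : qV Q * qV Q * seq (qE Q)) : K :=
  match (insub t : option (qpath Q)) with Some p => f p | None => 0 end.

Definition cpa_mul (f g : cpa) : cpa := fun p =>
  let: (i, j, w) := val p in
  \sum_(k < (size w).+1) \sum_(m : qV Q)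
     coef f (i, m, take k w) * coef g (m, j, drop k w).

Definition cpa_e (i : qV Q) : cpa := fun p =>
  if val p == (i, i, [::]) then 1 else 0.
Definition cpa_one : cpa := fun p => if pword p == [::] then 1 else 0.

(* closure in the m-adic topology: x is in the closure of U iff for every n
   some u in U agrees with x on all paths of length < n (x - u in m^n). *)
Definition closure (U : cpa -> Prop) (x : cpa) : Prop :=
  forall n : nat, exists u, U u /\ forall p, (plen p < n)%N -> x p = u p.

Definition ideal_gen (T : Type) (gen : T -> cpa) (x : cpa) : Prop :=
  exists n (l r : 'I_n -> cpa) (t : 'I_n -> T),
    forall p, x p = \sum_(k < n) cpa_mul (cpa_mul (l k) (gen (t k))) (r k) p.

Definition comm_span (x : cpa) : Prop :=
  exists n (f g : 'I_n -> cpa),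
    forall p, x p = \sum_(k < n) (cpa_mul (f k) (g k) p - cpa_mul (g k) (f k) p).

(* coefficient of a cyclic word (read as a cyclic path based at tgt of its
   first arrow) *)
Definition coefw (f : cpa) (u : seq (qE Q)) : K :=
  if u is b :: _ then coef f (qtgt b, qtgt b, u) else 0.

(* cyclic derivative, extended continuously:
   d_a(a_1...a_d) = sum_{p : a_p = a} a_{p+1}...a_d a_1...a_{p-1}.
   The coefficient of the path q in d_a S is the sum of the coefficients in S
   of the words c with a marked position p, a_p = a, whose rotation at p is
   a q, i.e. of the rotations rotr k (a :: q), k < size q + 1. *)
Definition cyc_deriv (a : qE Q) (S : cpa) : cpa := fun q =>
  \sum_(k < (plen q).+1) coefw S (rotr k (a :: pword q)).

Definition jac_ideal (S : cpa) : cpa -> Prop :=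
  closure (ideal_gen (fun a : qE Q => cyc_deriv a S)).

Definition jac_fin_dim (S : cpa) : Prop :=
  exists n (b : 'I_n -> cpa), forall x, exists c : 'I_n -> K,
    jac_ideal S (fun p => x p - \sum_(k < n) c k * b k p).

(* Preimage in R<<A>> of the subspace {P,P} + image(R) of P = P(A,S):
   the closure of (span of commutators) + J(S) (this is the preimage of the
   closure, for the quotient topology, of the span of commutators of P),
   plus the span of the idempotents e_i. Def(A,S) = R<<A>> / def_sub S. *)
Definition def_sub (S : cpa) (x : cpa) : Prop :=
  exists c : qV Q -> K,
    closure (fun z => exists w y, comm_span w /\ jac_ideal S y /\
                          forall p, z p = w p + y p)
            (fun p => x p - \sum_(i : qV Q) c i * cpa_e i p).

Definition rigid (S : cpa) : Prop := forall x, def_sub S x.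

Definition is_cyclic (p : qpath Q) : bool :=
  ((val p).1.1 == (val p).1.2) && (pword p != [::]).
Definition potential (S : cpa) : Prop := forall p, S p != 0 -> is_cyclic p.
Definition cyc_equiv (p q : qpath Q) : Prop :=
  exists k, pword q = rot k (pword p).
Definition is_QP (S : cpa) : Prop :=
  [/\ forall a : qE Q, qsrc a != qtgt a,
      potential S &
      forall p q, p != q -> S p != 0 -> S q != 0 -> ~ cyc_equiv p q].
End CPA.

Lemma andb_left (b c : bool) : b && c -> b. Proof. by case/andP. Qed.
Lemma andb_right (b c : bool) : b && c -> c. Proof. by case/andP. Qed.

Section Restriction.
Variables (Q : quiver) (I : {set qV Q}).

Definition rV : finType := {v : qV Q | v \in I}.
Definition rE : finType :=
  {a : qE Q | (qsrc a \in I) && (qtgt a \in I)}.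
Definition rsrc (a : rE) : rV := exist _ (qsrc (val a)) (andb_left (valP a)).
Definition rtgt (a : rE) : rV := exist _ (qtgt (val a)) (andb_right (valP a)).

Definition restrict : quiver := @Quiver rV rE rsrc rtgt.

Definition embed_path (t : rV * rV * seq rE) : qV Q * qV Q * seq (qE Q) :=
  let: (i, j, w) := t in (val i, val j, map val w).

(* psi_I : R<<A>> -> R<<A|_I>>, the continuous algebra homomorphism fixing the
   arrows of A|_I and killing all other arrows and the e_i, i \notin I:
   the coefficient of a path of A|_I in psi_I f is its coefficient in f. *)
Definition psi (K : fieldType) (f : cpa K Q) : cpa K restrict :=
  fun p => coef f (embed_path (val p)).
End Restriction.
Arguments psi {Q} I {K} f _.
Arguments cpa_one K Q _ : clear implicits.
Arguments cpa_mul {K Q} f g _.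
Arguments jac_ideal {K Q} S _.
Arguments def_sub {K Q} S x.
Arguments jac_fin_dim {K Q} S.
Arguments rigid {K Q} S.
Arguments is_QP {K Q} S.

From Pilot Require Import Defs.
From mathcomp Require Import all_boot all_order all_algebra.
From Stdlib Require Import FunctionalExtensionality.
Set Implicit Arguments. Unset Strict Implicit. Unset Printing Implicit Defensive.
Import GRing.Theory.
Local Open Scope ring_scope.

(* The restriction psi_I reads off the coefficients of the paths of A|_I; it
   is a continuous algebra homomorphism with a linear section (extension by
   zero), hence surjective.  For an arrow a of A|_I it sends d_a S to
   d_a (S|_I); for any other arrow a it kills d_a S, because a cyclic path
   a q with q a path of A|_I forces both endpoints of a into I (for q = e_i
   this is where the absence of loops is used).  So psi_I maps J(S) into
   J(S|_I), commutators to commutators and each e_i to e_i or 0, and it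
   induces the two epimorphisms; being onto, it transfers finite
   dimensionality of the Jacobian algebra and rigidity. *)

Section PathAlgebra.
Variables (K : fieldType) (Q : quiver).

Lemma coef0 (t : qV Q * qV Q * seq (qE Q)) :
  coef (fun _ : qpath Q => (0 : K)) t = 0.
Proof. by rewrite /coef; case: insub. Qed.

Lemma cpa_mul0l (g : cpa K Q) : cpa_mul (fun _ => 0) g = fun _ => 0.
Proof.
apply: functional_extensionality => -[[[i j] w] Vp]; rewrite /cpa_mul /=.
by rewrite big1 // => k _; rewrite big1 // => m _; rewrite coef0 mul0r.
Qed.

Lemma cpa_mul0r (f : cpa K Q) : cpa_mul f (fun _ => 0) = fun _ => 0.
Proof.
apply: functional_extensionality => -[[[i j] w] Vp]; rewrite /cpa_mul /=.
by rewrite big1 // => k _; rewrite big1 // => m _; rewrite coef0 mulr0.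
Qed.

Lemma ideal_gen_partial (T : finType) (gen : T -> cpa K Q) n
    (l r : 'I_n -> cpa K Q) (h : 'I_n -> option T) :
  ideal_gen gen (fun p =>
    \sum_(k < n) cpa_mul (cpa_mul (l k) (oapp gen (fun _ => 0) (h k))) (r k) p).
Proof.
case: (pickP (fun _ : T => true)) => [t0 _ | T0].
  exists n, l, (fun k => if h k is Some _ then r k else fun _ => 0),
    (fun k => odflt t0 (h k)).
  move=> p; apply: eq_bigr => k _.
  by case: (h k) => [t|] //=; rewrite cpa_mul0r cpa_mul0l cpa_mul0r.
have t0 : 'I_0 -> T by case=> m; rewrite ltn0.
exists 0%N, (fun _ _ => 0), (fun _ _ => 0), t0 => p.
rewrite big_ord0 big1 // => k _.
by case: (h k) => [t|]; [have := T0 t | rewrite /= cpa_mul0r cpa_mul0l].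
Qed.

End PathAlgebra.

Section Restriction.
Variables (K : fieldType) (Q : quiver) (I : {set qV Q}).

Lemma valid_embed_path (t : rV I * rV I * seq (rE I)) :
  valid_path (Q := restrict I) t = valid_path (embed_path t).
Proof.
case: t => [[i j] [|a w]] /=; first by rewrite val_eqE.
rewrite last_map path_map -!val_eqE /=.
by congr [&& _, _ & _]; apply: eq_path => x y /=; rewrite -val_eqE.
Qed.

Definition embed_qpath (q : qpath (restrict I)) : qpath Q :=
  exist _ (embed_path (val q)) (etrans (esym (valid_embed_path (val q))) (valP q)).

Lemma plen_embed_qpath q : plen (embed_qpath q) = plen q.
Proof. by case: q => [[[i j] w] Vp]; rewrite /plen /= size_map. Qed.

Lemma coef_val (f : cpa K Q) p : coef f (val p) = f p.
Proof. by rewrite /coef valK. Qed.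

Lemma psiE (f : cpa K Q) q : psi I f q = f (embed_qpath q).
Proof. by rewrite /psi -coef_val. Qed.

Lemma coef_psi (f : cpa K Q) t : coef (psi I f) t = coef f (embed_path t).
Proof.
case V: (valid_path (Q := restrict I) t).
  by rewrite /coef (insubT _ V) psiE -coef_val.
have V' : valid_path (embed_path t) = false by rewrite -valid_embed_path.
by rewrite /coef (insubF _ V) (insubF _ V').
Qed.

Lemma sum_restrict (F : qV Q -> K) : (forall m, m \notin I -> F m = 0) ->
  \sum_m F m = \sum_(m : rV I) F (val m).
Proof.
move=> F0; rewrite (bigID (mem I)) /= [X in _ + X]big1 ?addr0 //.
exact: big_sub.
Qed.

Lemma coef_src_notin (f : cpa K Q) i m (u : seq (rE I)) :
  i \in I -> m \notin I -> coef f (i, m, map val u) = 0.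
Proof.
move=> iI mI; rewrite /coef insubF //.
case: u => [|a u] /=; first by apply/negbTE; apply: contraNneq mI => <-.
rewrite last_map; apply/negbTE; rewrite !negb_and; apply/orP; right.
apply/orP; left; apply: contraNneq mI => <-.
by case/andP: (valP (last a u)).
Qed.

Lemma psi_mul (f g : cpa K Q) :
  psi I (cpa_mul f g) = cpa_mul (psi I f) (psi I g).
Proof.
apply: functional_extensionality => -[[[i j] w] Vp].
rewrite psiE /cpa_mul /= size_map; apply: eq_bigr => k _.
rewrite sum_restrict => [|m mI]; last first.
  by rewrite -map_take coef_src_notin ?mul0r // (valP i).
by apply: eq_bigr => m _; rewrite !coef_psi /= map_take map_drop.
Qed.

Lemma psi_one q : psi I (cpa_one K Q) q = cpa_one K (restrict I) q.
Proof. by rewrite psiE; case: q => [[[i j] [|a w]] Vp]. Qed.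

Definition unembed_path (t : qV Q * qV Q * seq (qE Q)) :
    option (rV I * rV I * seq (rE I)) :=
  let: (i, j, w) := t in
  if (insub i, insub j) is (Some i', Some j') then Some (i', j', pmap insub w)
  else None.

Definition extend_by0 (y : cpa K (restrict I)) : cpa K Q := fun p =>
  if unembed_path (val p) is Some t then coef y t else 0.

Lemma psi_extend_by0 y : psi I (extend_by0 y) = y.
Proof.
apply: functional_extensionality => -[[[i j] w] V].
rewrite psiE /extend_by0 /= !valK (map_pK (@valK _ _ _)).
by rewrite /coef (insubT _ V).
Qed.

Lemma coefw_psi (S : cpa K Q) (u : seq (rE I)) :
  coefw (psi I S) u = coefw S (map val u).
Proof. by case: u => [|b u] //=; rewrite coef_psi. Qed.

Lemma psi_cyc_deriv (S : cpa K Q) (a : rE I) :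
  psi I (cyc_deriv (val a) S) = cyc_deriv (a : qE (restrict I)) (psi I S).
Proof.
apply: functional_extensionality => -[[[i j] w] Vp].
rewrite psiE /cyc_deriv /plen /pword /= size_map.
by apply: eq_bigr => k _; rewrite coefw_psi map_rotr.
Qed.

Lemma cycle_coefw (S : cpa K Q) u :
  coefw S u != 0 -> cycle (fun x y : qE Q => qsrc x == qtgt y) u.
Proof.
case: u => [|b u] /=; first by rewrite eqxx.
rewrite /coef; case: insubP => [p V _ _|]; last by rewrite eqxx.
by case/and3P: V => _ /eqP src_last chain; rewrite rcons_path chain /= src_last.
Qed.

Lemma psi_cyc_deriv_notin (S : cpa K Q) (a : qE Q) :
  (forall b : qE Q, qsrc b != qtgt b) ->
  ~~ ((qsrc a \in I) && (qtgt a \in I)) ->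
  psi I (cyc_deriv a S) = fun _ => 0.
Proof.
move=> noloop aI; apply: functional_extensionality => -[[[i j] w] Vp].
rewrite psiE /cyc_deriv; apply: big1 => k _; apply/eqP.
apply: contraR aI => /cycle_coefw; rewrite rotr_cycle /pword /=.
case: w Vp {k} => [|b w] _ /=; first by rewrite andbT (negbTE (noloop a)).
rewrite rcons_path /= last_map => /and3P[/eqP-> _ /eqP<-].
by case/andP: (valP b) => _ ->; case/andP: (valP (last b w)) => ->.
Qed.

Lemma psi_ideal_gen (S u : cpa K Q) :
  (forall b : qE Q, qsrc b != qtgt b) ->
  ideal_gen (fun a : qE Q => cyc_deriv a S) u ->
  ideal_gen (fun a : qE (restrict I) => cyc_deriv a (psi I S)) (psi I u).
Proof.
move=> noloop [n [l [r [t Hu]]]].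
have -> : psi I u = fun p => \sum_(k < n) cpa_mul (cpa_mul (psi I (l k))
    (oapp (fun a : qE (restrict I) => cyc_deriv a (psi I S)) (fun _ => 0)
       (insub (t k) : option (rE I))))
    (psi I (r k)) p.
  apply: functional_extensionality => p; rewrite psiE Hu.
  apply: eq_bigr => k _; rewrite -psiE !psi_mul.
  case: (@insubP _ _ (rE I) (t k)) => [a _ <-|aI] /=; first by rewrite psi_cyc_deriv.
  by rewrite psi_cyc_deriv_notin // cpa_mul0r cpa_mul0l cpa_mul0r.
exact: ideal_gen_partial.
Qed.

Lemma psi_closure (U : cpa K Q -> Prop) (U' : cpa K (restrict I) -> Prop) x :
  (forall u, U u -> U' (psi I u)) -> Defs.closure U x -> Defs.closure U' (psi I x).
Proof.
move=> UU' cx n; have [u [Uu xu]] := cx n.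
exists (psi I u); split; first exact: UU'.
by move=> p lp; rewrite !psiE xu // plen_embed_qpath.
Qed.

Lemma psi_jac_ideal (S x : cpa K Q) : (forall b : qE Q, qsrc b != qtgt b) ->
  jac_ideal S x -> jac_ideal (psi I S) (psi I x).
Proof. by move=> noloop; apply: psi_closure => u; apply: psi_ideal_gen. Qed.

Lemma psi_comm_span (w : cpa K Q) : comm_span w -> comm_span (psi I w).
Proof.
case=> n [f [g Hw]]; exists n, (fun k => psi I (f k)), (fun k => psi I (g k)).
by move=> p; rewrite psiE Hw; apply: eq_bigr => k _; rewrite -!psi_mul !psiE.
Qed.

Lemma sum_cpa_e_restrict (c : qV Q -> K) q :
  \sum_(i : qV Q) c i * @cpa_e K Q i (embed_qpath q) =
  \sum_(i : rV I) c (val i) * @cpa_e K (restrict I) i q.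
Proof.
case: q => [[[a b] w] V]; rewrite sum_restrict => [|m mI]; last first.
  rewrite /cpa_e /=; case: ifP; rewrite ?mulr0 // => /eqP [] am.
  by move: mI; rewrite -am (valP a).
apply: eq_bigr => i _; rewrite /cpa_e /= !xpair_eqE !val_eqE.
by case: w {V}.
Qed.

Lemma psi_def_sub (S x : cpa K Q) : (forall b : qE Q, qsrc b != qtgt b) ->
  def_sub S x -> def_sub (psi I S) (psi I x).
Proof.
move=> noloop [c Hc]; exists (fun i : rV I => c (val i)).
have -> : (fun p => psi I x p - \sum_(i : rV I) c (val i) * @cpa_e K (restrict I) i p) =
    psi I (fun p => x p - \sum_i c i * @cpa_e K Q i p).
  by apply: functional_extensionality => q; rewrite !psiE sum_cpa_e_restrict.
apply: psi_closure Hc => z [w [y [cw [jy zE]]]].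
exists (psi I w), (psi I y); split; first exact: psi_comm_span.
by split; [exact: psi_jac_ideal | move=> p; rewrite !psiE zE].
Qed.

Lemma jac_fin_dim_restrict (S : cpa K Q) : (forall b : qE Q, qsrc b != qtgt b) ->
  jac_fin_dim S -> jac_fin_dim (psi I S).
Proof.
move=> noloop [n [b Hb]]; exists n, (fun k => psi I (b k)) => y.
have [c Hc] := Hb (extend_by0 y); exists c.
have -> : (fun p => y p - \sum_(k < n) c k * psi I (b k) p) =
    psi I (fun p => extend_by0 y p - \sum_(k < n) c k * b k p).
  apply: functional_extensionality => q.
  rewrite psiE -(psiE (extend_by0 y)) psi_extend_by0; congr (_ - _).
  by apply: eq_bigr => k _; rewrite psiE.
exact: psi_jac_ideal.
Qed.

Lemma rigid_restrict (S : cpa K Q) : (forall b : qE Q, qsrc b != qtgt b) ->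
  rigid S -> rigid (psi I S).
Proof. by move=> noloop rigidS y; rewrite -(psi_extend_by0 y); apply: psi_def_sub. Qed.

End Restriction.

Theorem proposition8p9 (K : fieldType) (Q : quiver) (S : cpa K Q)
    (I : {set qV Q}) :
  is_QP S ->
  (forall f g : cpa K Q, forall p,
      psi I (cpa_mul f g) p = cpa_mul (psi I f) (psi I g) p) /\
  (forall p, psi I (cpa_one K Q) p = cpa_one K (restrict I) p) /\
  (forall x, jac_ideal S x -> jac_ideal (psi I S) (psi I x)) /\
  (forall y : cpa K (restrict I), exists x, forall p, psi I x p = y p) /\
  (forall x, def_sub S x -> def_sub (psi I S) (psi I x)) /\
  (jac_fin_dim S -> jac_fin_dim (psi I S)) /\
  (rigid S -> rigid (psi I S)).
Proof.
case=> noloop _ _.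
split; first by move=> f g p; rewrite psi_mul.
split; first exact: psi_one.
split; first by move=> x; apply: psi_jac_ideal.
split; first by move=> y; exists (extend_by0 y); rewrite psi_extend_by0.
split; first by move=> x; apply: psi_def_sub.
split; [exact: jac_fin_dim_restrict | exact: rigid_restrict].
Qed.
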